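(* For all $\tau>0$ and all $\lambda,\lambda'\in\mathbb{R}^m_+$, $$\max_{s\in\mathcal S}\bigl\|\pi^*_{\tau,\lambda}(\cdot\mid s)-\pi^*_{\tau,\lambda'}(\cdot\mid s)\bigr\|_1\le\frac{R_{\max}}{(1-\gamma)\tau}\|\lambda-\lambda'\|_2.$$
   Context: Finite MDP with state space $\mathcal S$, action space $\mathcal A$, transition kernel $\mathrm P$, discount $\gamma\in(0,1)$, positive finite rewards $r_0,r_1,\dots,r_m:\mathcal S\times\mathcal A\to(0,\infty)$, $r_{i,\max}=\max_{s,a}r_i(s,a)$, $R_{\max}=\sqrt{\sum_{i=1}^mr_{i,\max}^2}$. For $\lambda\in\mathbb{R}^m_+$ let $r_\lambda=r_0+\sum_{i=1}^m\lambda_ir_i$. For $\tau>0$ and a stationary policy $\pi$, the entropy-regularized value is $V^\pi_{\tau,\lambda}(s)=\mathbb{E}[\sum_{t\ge0}\gamma^t(r_\lambda(s_t,a_t)-\tau\log\pi(a_t\mid s_t))\mid s_0=s]$ with $a_t\sim\pi(\cdot\mid s_t)$, $s_{t+1}\sim\mathrm P(\cdot\mid s_t,a_t)$. There is a unique stationary policy maximizing $V^\pi_{\tau,\lambda}(s)$ simultaneously for all $s\in\mathcal S$; it is denoted $\pi^*_{\tau,\lambda}$ (the optimal policy of the entropy-regularized MDP with reward $r_\lambda$). *)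

From HB Require Import structures.
From mathcomp Require Import all_boot all_order all_algebra.
From mathcomp Require Import all_classical all_reals all_analysis.
Set Implicit Arguments. Unset Strict Implicit. Unset Printing Implicit Defensive.
Import Order.TTheory GRing.Theory Num.Theory.
Import numFieldNormedType.Exports.
Local Open Scope ring_scope.

Section MDP.
Variables (R : realType) (S A : finType).

Definition is_kernel (P : S -> A -> S -> R) : Prop :=
  (forall s a s', 0 <= P s a s') /\ (forall s a, \sum_(s' : S) P s a s' = 1).

Definition is_policy (pi : S -> A -> R) : Prop :=
  (forall s a, 0 <= pi s a) /\ (forall s, \sum_(a : A) pi s a = 1).

Definition rlam (m : nat) (r0 : S -> A -> R) (r : 'I_m -> S -> A -> R)
  (lam : 'I_m -> R) (s : S) (a : A) : R :=
  r0 s a + \sum_(i < m) lam i * r i s a.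

(* one-step expected regularized reward under pi:
   E_{a ~ pi(.|s)} [ r(s,a) - tau log pi(a|s) ]  (convention 0 log 0 = 0, as ln 0 = 0) *)
Definition reg_reward (tau : R) (rw : S -> A -> R) (pi : S -> A -> R) (s : S) : R :=
  \sum_(a : A) pi s a * (rw s a - tau * ln (pi s a)).

Fixpoint state_dist (P : S -> A -> S -> R) (pi : S -> A -> R) (s0 : S) (t : nat)
  : S -> R :=
  match t with
  | 0 => fun s => if s == s0 then 1 else 0
  | t'.+1 => fun s' =>
      \sum_(s : S) state_dist P pi s0 t' s * \sum_(a : A) pi s a * P s a s'
  end.

Definition reg_value (P : S -> A -> S -> R) (gamma tau : R) (rw : S -> A -> R)
  (pi : S -> A -> R) (s0 : S) : R :=
  limn (series (fun t : nat => gamma ^+ t *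
     \sum_(s : S) state_dist P pi s0 t s * reg_reward tau rw pi s)).

Definition reg_optimal (P : S -> A -> S -> R) (gamma tau : R) (rw : S -> A -> R)
  (pi : S -> A -> R) : Prop :=
  is_policy pi /\
  forall pi', is_policy pi' -> forall s, reg_value P gamma tau rw pi' s <= reg_value P gamma tau rw pi s.

Definition rmax (rw : S -> A -> R) : R := \big[Num.max/0]_(sa : S * A) rw sa.1 sa.2.

End MDP.

Definition norm2 {R : realType} {m : nat} (x : 'I_m -> R) : R :=
  Num.sqrt (\sum_(i < m) x i ^+ 2).

From HB Require Import structures.
From mathcomp Require Import all_boot all_order all_algebra.
From mathcomp Require Import all_classical all_reals all_analysis.
From mathcomp Require Import lra ring.
Import Order.TTheory GRing.Theory Num.Theory.
Import numFieldNormedType.Exports.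
Local Open Scope ring_scope.

(* An optimal policy is the softmax of its own Q-function: by the Gibbs
   variational principle the soft-greedy policy gains, at every state, at least
   the gap [tau ln lse Q - V], which is nonnegative and vanishes exactly when the
   policy is the softmax; so optimality forces the gap to zero and the optimal
   value is [tau ln lse Q].  Both [tau ln lse] and [Q] are Lipschitz in
   sup-norm, so comparing two optimal values at the state of largest deviation
   [D] gives [D <= K + gamma D] for a reward perturbation of size [K]; softmax
   is [1 / tau]-Lipschitz from sup-norm to l1-norm, and for [r_lambda] the
   perturbation is bounded by Cauchy-Schwarz. *)

Section Preliminaries.
Context {R : realType}.

Lemma inhabited_of_sum_eq1 {I : finType} {F : I -> R} :
  \sum_i F i = 1 -> inhabited I.
Proof.
case: (pickP I) => [i _ _|I0]; first by constructor.
by rewrite big_pred0 // => /eqP; rewrite eq_sym oner_eq0.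
Qed.

Lemma ln_le_subr1 {y : R} : 0 < y -> ln y <= y - 1.
Proof. by move=> y0; have := @le_ln1Dx R (y - 1); rewrite addrCA subrr addr0; apply; lra. Qed.

Lemma expR_le_log_mean {x : R} : 0 <= x -> 2 * (expR x - 1) <= x * (expR x + 1).
Proof.
move=> x0; rewrite -subr_ge0.
have [->|xn0] := eqVneq x 0; first by rewrite expR0 mul0r subrr mulr0 subrr.
have xp : 0 < x by rewrite lt_neqAle eq_sym xn0.
pose f (y : R) := y * expR y + y - 2 * expR y.
pose df (y : R) := (expR y + y * expR y) + 1 - 2 * expR y.
have f_deriv (y : R) : is_derive y 1 f (df y).
  by apply: is_derive_eq; rewrite /GRing.scale /= mulr1 (addrC (y * _)).
have f_cont : {within `[0, x], continuous f}%classic.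
  by apply: derivable_within_continuous => y _; case: (f_deriv y).
have [c /[!in_itv] /= /andP[c0 cx]] := MVT xp (fun y _ => f_deriv y) f_cont.
rewrite /f expR0 !mul0r add0r sub0r mulr1 opprK subr0 => fx.
suff : 0 <= df c * x by lra.
(* [df c >= 0] is [expR (- c) >= 1 - c] multiplied by [expR c] *)
apply: mulr_ge0 (ltW xp); rewrite /df.
have := expR_ge1Dx (- c); rewrite expRN.
have ec := expR_gt0 c.
rewrite -(ler_pM2r ec) mulVf ?gt_eqF // => h.
nra.
Qed.

Lemma log_mean_le {a b : R} : 0 < a -> 0 < b ->
  2 * (a - b) ^+ 2 <= (a - b) * (ln a - ln b) * (a + b).
Proof.
wlog ba : a b / b <= a.
  move=> H a0 b0; have [/H|/ltW/H] := leP b a; first exact.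
  by move=> /(_ b0 a0); rewrite -sqrrN opprB; congr (_ <= _); ring.
move=> a0 b0.
set x := ln a - ln b.
have x0 : 0 <= x by rewrite subr_ge0 ler_ln ?posrE.
have -> : a = b * expR x by rewrite expRB !lnK ?posrE // mulrC divfK ?gt_eqF.
have ex1 : 0 <= expR x - 1 by rewrite subr_ge0 -expR0 ler_expR.
have hx : 0 <= x * (expR x + 1) - 2 * (expR x - 1) by rewrite subr_ge0 expR_le_log_mean.
have := mulr_ge0 (mulr_ge0 (sqr_ge0 b) ex1) hx.
lra.
Qed.

Lemma ln_ratio_le {p s : R} : 0 <= p -> 0 < s ->
  p * (ln s - ln p) <= 2 * (Num.sqrt s * Num.sqrt p - p).
Proof.
move=> p0 s0.
have [->|pn0] := eqVneq p 0; first by rewrite mul0r sqrtr0 mulr0 subrr mulr0.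
have pp : 0 < p by rewrite lt_neqAle eq_sym pn0.
suff key (a b : R) : 0 < a -> 0 < b ->
    b ^+ 2 * (ln (a ^+ 2) - ln (b ^+ 2)) <= 2 * (a * b - b ^+ 2).
  by have := key (Num.sqrt s) (Num.sqrt p); rewrite !sqrtr_gt0 !sqr_sqrtr ?(ltW s0) // => /(_ s0 pp).
move=> a0 b0; rewrite !lnXn // !mulr2n.
have := ln_le_subr1 (divr_gt0 a0 b0); rewrite ln_div ?posrE // => hab.
have := ler_wpM2l (ltW (exprn_gt0 2 b0)) hab.
have -> : b ^+ 2 * (a / b - 1) = a * b - b ^+ 2 by field; rewrite gt_eqF.
lra.
Qed.

Lemma sqr_sum_mul_le {I : finType} (u v : I -> R) :
  (\sum_i u i * v i) ^+ 2 <= (\sum_i u i ^+ 2) * (\sum_i v i ^+ 2).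
Proof.
set U := \sum_i u i ^+ 2; set V := \sum_i v i ^+ 2; set C := \sum_i u i * v i.
have V0 : 0 <= V by apply: sumr_ge0 => i _; exact: sqr_ge0.
have key : 0 <= V * (V * U - C ^+ 2).
  have : 0 <= \sum_i (u i * V - C * v i) ^+ 2 by apply: sumr_ge0 => i _; exact: sqr_ge0.
  congr (_ <= _).
  rewrite (eq_bigr (fun i => V ^+ 2 * u i ^+ 2 - 2 * V * C * (u i * v i) + C ^+ 2 * v i ^+ 2)).
    by rewrite big_split sumrB /= -!mulr_sumr -/U -/V -/C; ring.
  by move=> i _; ring.
have [V00|Vn0] := eqVneq V 0.
  have v0 i : v i = 0.
    apply/eqP; rewrite -sqrf_eq0; move/eqP: V00; rewrite psumr_eq0 => [/allP|j _].
      by move=> /(_ i (mem_index_enum _)).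
    exact: sqr_ge0.
  rewrite /C big1 ?expr0n ?mulr_ge0 // => [|i _]; last by rewrite v0 mulr0.
  by apply: sumr_ge0 => i _; exact: sqr_ge0.
have Vp : 0 < V by rewrite lt_neqAle eq_sym Vn0.
by rewrite -subr_ge0 mulrC -(pmulr_rge0 _ Vp).
Qed.

Lemma sqr_sum_le_weighted {I : finType} (u w : I -> R) : (forall i, 0 < w i) ->
  (\sum_i u i) ^+ 2 <= (\sum_i u i ^+ 2 / w i) * (\sum_i w i).
Proof.
move=> w0.
have sw i : Num.sqrt (w i) != 0 by rewrite gt_eqF ?sqrtr_gt0.
have := sqr_sum_mul_le (fun i => u i / Num.sqrt (w i)) (fun i => Num.sqrt (w i)).
under eq_bigr do rewrite divfK //.
have sqr_sqrt_w i : Num.sqrt (w i) ^+ 2 = w i by rewrite sqr_sqrtr // ltW.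
have -> : \sum_i (u i / Num.sqrt (w i)) ^+ 2 = \sum_i u i ^+ 2 / w i.
  by apply: eq_bigr => i _; rewrite expr_div_n sqr_sqrt_w.
by under [X in _ * X]eq_bigr do rewrite sqr_sqrt_w.
Qed.

End Preliminaries.

Lemma fixpoint_ge_forcing {R : realType} {S : finType} (gamma : R) (K : S -> S -> R)
    (b X : S -> R) :
  0 <= gamma < 1 -> (forall s s', 0 <= K s s') -> (forall s, \sum_s' K s s' = 1) ->
  (forall s, 0 <= b s) -> (forall s, X s = b s + gamma * \sum_s' K s s' * X s') ->
  forall s, b s <= X s.
Proof.
move=> /andP[gamma0 gamma1] K0 K1 b0 X_eq s.
have [smin _ Xmin] := @arg_minP _ _ _ s xpredT X isT.
have avg_ge s' : X smin <= \sum_s1 K s' s1 * X s1.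
  rewrite -[X smin]mul1r -(K1 s') mulr_suml.
  by apply: ler_sum => s1 _; apply: ler_wpM2l; [exact: K0 | exact: Xmin].
(* at a minimiser of [X] the equation forces [X >= 0] *)
have Xmin0 : 0 <= X smin.
  have := ler_wpM2l gamma0 (avg_ge smin); have := X_eq smin; have := b0 smin.
  have gamma1' : 0 < 1 - gamma by rewrite subr_gt0.
  by move=> *; rewrite -(pmulr_rge0 _ gamma1'); lra.
have := ler_wpM2l gamma0 (avg_ge s); have := X_eq s; have := mulr_ge0 gamma0 Xmin0.
lra.
Qed.

Section Softmax.
Context {R : realType} {A : finType}.
Variables (tau : R) (a0 : A).
Hypothesis tau_gt0 : 0 < tau.

Definition lse (q : A -> R) : R := \sum_a expR (q a / tau).
Definition softmax (q : A -> R) (a : A) : R := expR (q a / tau) / lse q.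

Lemma lse_gt0 q : 0 < lse q.
Proof.
rewrite /lse (bigD1 a0) //= ltr_pwDl ?expR_gt0 //.
by apply: sumr_ge0 => a _; exact: expR_ge0.
Qed.

Lemma softmax_gt0 q a : 0 < softmax q a.
Proof. by rewrite divr_gt0 ?expR_gt0 ?lse_gt0. Qed.

Lemma softmax_sum1 q : \sum_a softmax q a = 1.
Proof. by rewrite -mulr_suml divff // gt_eqF ?lse_gt0. Qed.

Lemma ln_softmax q a : ln (softmax q a) = q a / tau - ln (lse q).
Proof. by rewrite ln_div ?posrE ?expR_gt0 ?lse_gt0 // expRK. Qed.

Lemma softmax_entropy q :
  \sum_a softmax q a * (q a - tau * ln (softmax q a)) = tau * ln (lse q).
Proof.
under eq_bigr => a _ do rewrite ln_softmax.
rewrite (eq_bigr (fun a => softmax q a * (tau * ln (lse q)))) => [|a _].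
  by rewrite -mulr_suml softmax_sum1 mul1r.
by congr (_ * _); field; rewrite gt_eqF.
Qed.

Lemma gibbs_le (q p : A -> R) : (forall a, 0 <= p a) -> \sum_a p a = 1 ->
  \sum_a p a * (q a - tau * ln (p a))
    + tau * \sum_a (Num.sqrt (softmax q a) - Num.sqrt (p a)) ^+ 2
  <= tau * ln (lse q).
Proof.
move=> p0 p1.
set L := ln (lse q); set B := \sum_a Num.sqrt (softmax q a) * Num.sqrt (p a).
have entropy : \sum_a p a * (q a - tau * ln (p a)) =
    tau * L + tau * \sum_a p a * (ln (softmax q a) - ln (p a)).
  rewrite mulr_sumr (eq_bigr (fun a =>
    p a * (tau * L) + tau * (p a * (ln (softmax q a) - ln (p a))))) => [|a _].
    by rewrite big_split /= -mulr_suml p1 mul1r.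
  by rewrite ln_softmax /L; field; rewrite gt_eqF.
have hellinger : \sum_a (Num.sqrt (softmax q a) - Num.sqrt (p a)) ^+ 2 = 2 - 2 * B.
  rewrite (eq_bigr (fun a =>
    softmax q a + p a - 2 * (Num.sqrt (softmax q a) * Num.sqrt (p a)))) => [|a _].
    by rewrite sumrB big_split /= softmax_sum1 p1 -mulr_sumr.
  by rewrite sqrrB !sqr_sqrtr ?p0 ?(ltW (softmax_gt0 _ _)) //; ring.
have cross : \sum_a p a * (ln (softmax q a) - ln (p a)) <= 2 * B - 2.
  apply: (le_trans (ler_sum _ (fun a _ => ln_ratio_le (p0 a) (softmax_gt0 q a)))).
  by rewrite -mulr_sumr sumrB p1 mulrBr mulr1.
rewrite entropy hellinger.
have := ler_wpM2l (ltW tau_gt0) cross.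
lra.
Qed.

Lemma ln_lse_le_shift {q q' : A -> R} {e : R} : (forall a, `|q a - q' a| <= e) ->
  tau * ln (lse q) <= tau * ln (lse q') + e.
Proof.
move=> qq'.
have lse_le : lse q <= lse q' * expR (e / tau).
  rewrite /lse mulr_suml; apply: ler_sum => a _.
  rewrite -expRD ler_expR -mulrDl ler_pM2r ?invr_gt0 //.
  by have := qq' a; rewrite ler_norml; lra.
have h : ln (lse q) <= ln (lse q' * expR (e / tau)).
  by rewrite ler_ln ?posrE ?mulr_gt0 ?lse_gt0 ?expR_gt0.
rewrite lnM ?posrE ?lse_gt0 ?expR_gt0 // expRK in h.
have := ler_wpM2l (ltW tau_gt0) h.
by rewrite mulrDr mulrCA divff ?gt_eqF // mulr1.
Qed.

Lemma ln_lse_lipschitz {q q' : A -> R} {e : R} : (forall a, `|q a - q' a| <= e) ->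
  `|tau * ln (lse q) - tau * ln (lse q')| <= e.
Proof.
move=> qq'; have := ln_lse_le_shift qq'.
have : tau * ln (lse q') <= tau * ln (lse q) + e.
  by apply: ln_lse_le_shift => a; rewrite distrC.
rewrite ler_norml; lra.
Qed.

(* [T^2 <= J <= T e / tau] for the total variation [T] and the symmetrised
   relative entropy [J] of the two softmax distributions *)
Lemma softmax_l1_lipschitz {q q' : A -> R} {e : R} : (forall a, `|q a - q' a| <= e) ->
  \sum_a `|softmax q a - softmax q' a| <= e / tau.
Proof.
move=> qq'.
set p := softmax q; set p' := softmax q'.
set T := \sum_a `|p a - p' a|.
set J := \sum_a (p a - p' a) * (ln (p a) - ln (p' a)).
have T0 : 0 <= T by apply: sumr_ge0 => a _.
have J_le : J <= T * (e / tau).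
  have -> : J = \sum_a (p a - p' a) * ((q a - q' a) / tau).
    rewrite /J (eq_bigr (fun a => (p a - p' a) * ((q a - q' a) / tau)
       - (p a - p' a) * (ln (lse q) - ln (lse q')))) => [|a _].
      by rewrite sumrB -mulr_suml sumrB !softmax_sum1 subrr mul0r subr0.
    by rewrite /p /p' !ln_softmax; field; rewrite gt_eqF.
  rewrite mulr_suml; apply: ler_sum => a _.
  apply: le_trans (ler_norm _) _.
  rewrite normrM ler_wpM2l // normrM [`|tau^-1|]ger0_norm ?invr_ge0 ?(ltW tau_gt0) //.
  by rewrite ler_pM2r ?invr_gt0.
have J_ge : T ^+ 2 <= J.
  have w_gt0 a : 0 < p a + p' a by rewrite addr_gt0 ?softmax_gt0.
  apply: (le_trans (sqr_sum_le_weighted (fun a => `|p a - p' a|) _ w_gt0)).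
  rewrite big_split /= !softmax_sum1 mulr_suml /J; apply: ler_sum => a _.
  rewrite real_normK ?num_real // -mulrA mulrC -mulrA ler_pdivrMl //.
  by have := log_mean_le (softmax_gt0 q a) (softmax_gt0 q' a); rewrite -/p -/p'; lra.
have [->|Tn0] := eqVneq T 0.
  by rewrite divr_ge0 ?(ltW tau_gt0) // (le_trans (normr_ge0 _) (qq' a0)).
have Tp : 0 < T by rewrite lt_neqAle eq_sym Tn0.
by rewrite -(ler_pM2l Tp) -expr2 (le_trans J_ge J_le).
Qed.

End Softmax.

Section PolicyEvaluation.
Context {R : realType} {S A : finType}.
Variables (P : S -> A -> S -> R) (gamma tau : R).
Hypotheses (P_kernel : is_kernel P) (gamma_ge0 : 0 <= gamma) (gamma_lt1 : gamma < 1)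
  (tau_ge0 : 0 <= tau).
Implicit Types (pi rw : S -> A -> R) (s : S) (a : A).

Definition Ppi pi s s' := \sum_a pi s a * P s a s'.

Lemma Ppi_ge0 pi s s' : is_policy pi -> 0 <= Ppi pi s s'.
Proof. by case=> pi0 _; apply: sumr_ge0 => a _; rewrite mulr_ge0 ?P_kernel.1. Qed.

Lemma Ppi_sum1 pi s : is_policy pi -> \sum_s' Ppi pi s s' = 1.
Proof.
case=> _ pi1; rewrite exchange_big /= -(pi1 s); apply: eq_bigr => a _.
by rewrite -mulr_sumr P_kernel.2 mulr1.
Qed.

Lemma sum_Ppi pi (f : S -> R) s :
  \sum_s' Ppi pi s s' * f s' = \sum_a pi s a * \sum_s' P s a s' * f s'.
Proof.
under eq_bigr do rewrite mulr_suml.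
rewrite exchange_big; apply: eq_bigr => a _; rewrite mulr_sumr.
by apply: eq_bigr => s' _; rewrite mulrA.
Qed.

Lemma sum_state_dist0 pi s0 (f : S -> R) : \sum_s state_dist P pi s0 0 s * f s = f s0.
Proof.
rewrite (bigD1 s0) //= eqxx mul1r big1 ?addr0 // => s /negbTE ->.
by rewrite mul0r.
Qed.

Lemma state_distSr pi s0 t s' :
  state_dist P pi s0 t.+1 s' = \sum_s state_dist P pi s0 t s * Ppi pi s s'.
Proof. by []. Qed.

Lemma state_distSl pi s0 t s :
  state_dist P pi s0 t.+1 s = \sum_s1 Ppi pi s0 s1 * state_dist P pi s1 t s.
Proof.
elim: t s => [|t IH] s.
  rewrite state_distSr (sum_state_dist0 pi s0 (Ppi pi ^~ s)) /= (bigD1 s) //= eqxx mulr1 big1 ?addr0 //.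
  by move=> s1; rewrite eq_sym => /negbTE ->; rewrite mulr0.
rewrite state_distSr; under eq_bigr do rewrite IH mulr_suml.
rewrite exchange_big; apply: eq_bigr => s1 _.
by rewrite state_distSr mulr_sumr; apply: eq_bigr => s2 _; rewrite mulrA.
Qed.

Lemma state_dist_ge0 pi s0 t s : is_policy pi -> 0 <= state_dist P pi s0 t s.
Proof.
move=> pi_pol; elim: t s => [|t IH] s; first by rewrite /=; case: ifP.
by rewrite state_distSr; apply: sumr_ge0 => s1 _; rewrite mulr_ge0 // Ppi_ge0.
Qed.

Lemma state_dist_sum1 pi s0 t : is_policy pi -> \sum_s state_dist P pi s0 t s = 1.
Proof.
move=> pi_pol; elim: t => [|t IH].
  by rewrite -(sum_state_dist0 pi s0 (fun=> 1)); apply: eq_bigr => s _; rewrite mulr1.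
under eq_bigr do rewrite state_distSr.
rewrite exchange_big /= -IH; apply: eq_bigr => s _.
by rewrite -mulr_sumr Ppi_sum1 // mulr1.
Qed.

Lemma reg_reward_ge0 rw pi s : is_policy pi -> (forall s a, 0 <= rw s a) ->
  0 <= reg_reward tau rw pi s.
Proof.
move=> [pi0 pi1] rw0; apply: sumr_ge0 => a _; rewrite mulr_ge0 // subr_ge0.
have pi_le1 : pi s a <= 1.
  by rewrite -(pi1 s) (bigD1 a) //= lerDl sumr_ge0.
by rewrite (le_trans _ (rw0 s a)) // mulr_ge0_le0 // ln_le0.
Qed.

Definition value_term rw pi s0 t :=
  gamma ^+ t * \sum_s state_dist P pi s0 t s * reg_reward tau rw pi s.

Lemma value_termS rw pi s0 t :
  value_term rw pi s0 t.+1 = gamma * \sum_s1 Ppi pi s0 s1 * value_term rw pi s1 t.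
Proof.
rewrite /value_term exprS -mulrA; congr (_ * _).
under eq_bigr do rewrite state_distSl mulr_suml.
rewrite exchange_big mulr_sumr; apply: eq_bigr => s1 _ /=.
by rewrite mulrCA; congr (_ * _); rewrite mulr_sumr; apply: eq_bigr => s _; rewrite mulrA.
Qed.

Lemma series_value_termS rw pi s0 n :
  series (value_term rw pi s0) n.+1 = reg_reward tau rw pi s0
    + gamma * \sum_s1 Ppi pi s0 s1 * series (value_term rw pi s1) n.
Proof.
rewrite /series /= big_nat_recl // {1}/value_term expr0 mul1r sum_state_dist0.
congr (_ + _); under eq_bigr do rewrite value_termS.
rewrite -mulr_sumr exchange_big /=; congr (_ * _).
by apply: eq_bigr => s1 _; rewrite mulr_sumr.
Qed.

Lemma cvg_series_value_term rw pi s0 : is_policy pi -> (forall s a, 0 <= rw s a) ->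
  cvgn (series (value_term rw pi s0)).
Proof.
move=> pi_pol rw0.
set B := \sum_s reg_reward tau rw pi s.
have rr0 s := reg_reward_ge0 rw pi s pi_pol rw0.
have dist0 t s := state_dist_ge0 pi s0 t s pi_pol.
have term0 t : 0 <= value_term rw pi s0 t.
  by rewrite mulr_ge0 ?exprn_ge0 // sumr_ge0 // => s _; rewrite mulr_ge0.
apply: (@series_le_cvg _ _ (geometric B gamma) term0).
- by move=> t; rewrite geometric_ge0 // sumr_ge0.
- move=> t; rewrite /value_term /= mulrC ler_wpM2r ?exprn_ge0 //.
  rewrite -[leRHS]mul1r -(state_dist_sum1 pi s0 t pi_pol) mulr_suml.
  apply: ler_sum => s _; rewrite ler_wpM2l // /B (bigD1 s) //= lerDl.
  by apply: sumr_ge0 => s1 _.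
- by apply: is_cvg_geometric_series; rewrite ger0_norm.
Qed.

Lemma reg_value_bellman rw pi s0 : is_policy pi -> (forall s a, 0 <= rw s a) ->
  reg_value P gamma tau rw pi s0 = reg_reward tau rw pi s0
    + gamma * \sum_s1 Ppi pi s0 s1 * reg_value P gamma tau rw pi s1.
Proof.
move=> pi_pol rw0.
have cvg_value s := cvg_series_value_term rw pi s pi_pol rw0.
set rhs := reg_reward tau rw pi s0 + _.
have lim_rhs : ((reg_reward tau rw pi s0 +
    gamma * \sum_s1 Ppi pi s0 s1 * series (value_term rw pi s1) n) @[n --> \oo] --> rhs)%classic.
  apply: cvgD; first exact: cvg_cst.
  apply: cvgM; first exact: cvg_cst.
  apply: cvg_big => [|s1 _]; first exact: add_continuous.
  by apply: cvgM; [exact: cvg_cst | exact: cvg_value].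
have lim_lhs : (series (value_term rw pi s0) n.+1 @[n --> \oo] -->
    reg_value P gamma tau rw pi s0)%classic.
  by rewrite (cvg_shiftS (series (value_term rw pi s0))); exact: cvg_value.
have shifted_series : (fun n => series (value_term rw pi s0) n.+1) = (fun n =>
    reg_reward tau rw pi s0 + gamma * \sum_s1 Ppi pi s0 s1 * series (value_term rw pi s1) n).
  by apply/funext => n; exact: series_value_termS.
rewrite shifted_series in lim_lhs.
exact: cvg_unique lim_lhs lim_rhs.
Qed.

End PolicyEvaluation.

Section Optimality.
Context {R : realType} {S A : finType}.
Variables (P : S -> A -> S -> R) (gamma tau : R) (a0 : A).
Hypotheses (P_kernel : is_kernel P) (gamma_ge0 : 0 <= gamma) (gamma_lt1 : gamma < 1)
  (tau_gt0 : 0 < tau).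
Implicit Types (pi rw : S -> A -> R) (s : S) (a : A).

Local Notation V := (reg_value P gamma tau).

Definition qvalue rw pi s a := rw s a + gamma * \sum_s' P s a s' * V rw pi s'.

Definition soft_greedy rw pi s a := softmax tau (qvalue rw pi s) a.

Lemma soft_greedy_policy rw pi : is_policy (soft_greedy rw pi).
Proof. by split=> [s a|s]; [exact/ltW/softmax_gt0 | exact: softmax_sum1]. Qed.

Lemma reg_value_qvalue rw pi s : is_policy pi -> (forall s a, 0 <= rw s a) ->
  V rw pi s = \sum_a pi s a * (qvalue rw pi s a - tau * ln (pi s a)).
Proof.
move=> pi_pol rw0.
rewrite reg_value_bellman ?(ltW tau_gt0) // sum_Ppi /reg_reward mulr_sumr -big_split.
by apply: eq_bigr => a _ /=; rewrite /qvalue; ring.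
Qed.

Lemma hellinger_le_lse_gap rw pi s : is_policy pi -> (forall s a, 0 <= rw s a) ->
  tau * \sum_a (Num.sqrt (soft_greedy rw pi s a) - Num.sqrt (pi s a)) ^+ 2
    <= tau * ln (lse tau (qvalue rw pi s)) - V rw pi s.
Proof.
move=> pi_pol rw0.
have := gibbs_le tau a0 tau_gt0 (qvalue rw pi s) (pi s) (pi_pol.1 s) (pi_pol.2 s).
by rewrite -reg_value_qvalue //; lra.
Qed.

(* the gap [tau ln lse Q - V] is the forcing term of the Bellman equation for
   the difference of the two values *)
Lemma lse_le_soft_greedy_value rw pi s : is_policy pi -> (forall s a, 0 <= rw s a) ->
  tau * ln (lse tau (qvalue rw pi s)) <= V rw (soft_greedy rw pi) s.
Proof.
move=> pi_pol rw0.
set sg := soft_greedy rw pi.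
pose gap s := tau * ln (lse tau (qvalue rw pi s)) - V rw pi s.
have gap0 s' : 0 <= gap s'.
  apply: le_trans (hellinger_le_lse_gap rw pi s' pi_pol rw0).
  by rewrite mulr_ge0 ?(ltW tau_gt0) // sumr_ge0 // => a _; exact: sqr_ge0.
suff : gap s <= V rw sg s - V rw pi s by rewrite /gap; lra.
apply: (fixpoint_ge_forcing gamma (Ppi P sg) gap (fun s => V rw sg s - V rw pi s)) => [|s1 s2|s1|//|s1].
- by rewrite gamma_ge0.
- exact: Ppi_ge0 (soft_greedy_policy _ _).
- exact: Ppi_sum1 (soft_greedy_policy _ _).
have sg_pol := soft_greedy_policy rw pi.
rewrite reg_value_bellman ?(ltW tau_gt0) //.
have -> : reg_reward tau rw sg s1
    = tau * ln (lse tau (qvalue rw pi s1)) - gamma * \sum_s2 Ppi P sg s1 s2 * V rw pi s2.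
  rewrite -(softmax_entropy tau a0 tau_gt0) sum_Ppi /reg_reward mulr_sumr -sumrB.
  by apply: eq_bigr => a _; rewrite /sg /soft_greedy /qvalue; ring.
have -> : \sum_s2 Ppi P sg s1 s2 * (V rw sg s2 - V rw pi s2) =
    \sum_s2 Ppi P sg s1 s2 * V rw sg s2 - \sum_s2 Ppi P sg s1 s2 * V rw pi s2.
  by rewrite -sumrB; apply: eq_bigr => s2 _; rewrite mulrBr.
rewrite /gap; ring.
Qed.

Lemma reg_optimal_softmax {rw pi : S -> A -> R} : (forall s a, 0 <= rw s a) ->
  reg_optimal P gamma tau rw pi -> forall s,
    (forall a, pi s a = softmax tau (qvalue rw pi s) a) /\
    V rw pi s = tau * ln (lse tau (qvalue rw pi s)).
Proof.
move=> rw0 [pi_pol pi_opt] s.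
have gap_le0 : tau * ln (lse tau (qvalue rw pi s)) - V rw pi s <= 0.
  rewrite subr_le0; apply: le_trans (lse_le_soft_greedy_value rw pi s pi_pol rw0) _.
  exact: pi_opt (soft_greedy_policy _ _) s.
have H0 := hellinger_le_lse_gap rw pi s pi_pol rw0.
have hellinger0 : \sum_a (Num.sqrt (soft_greedy rw pi s a) - Num.sqrt (pi s a)) ^+ 2 = 0.
  apply/eqP; rewrite eq_le sumr_ge0 ?andbT => [|a _]; last exact: sqr_ge0.
  by rewrite -(pmulr_rle0 _ tau_gt0) (le_trans H0 gap_le0).
split=> [a|]; last by move: H0; rewrite hellinger0 mulr0; lra.
move/eqP: hellinger0; rewrite psumr_eq0 => [/allP/(_ a (mem_index_enum _))|a1 _].
  rewrite /= sqrf_eq0 subr_eq0 => /eqP sqrt_eq.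
  by rewrite -[pi s a]sqr_sqrtr ?pi_pol.1 // -sqrt_eq sqr_sqrtr // ltW ?softmax_gt0.
exact: sqr_ge0.
Qed.

Lemma qvalue_dist_le {rw rw' pi pi' : S -> A -> R} {K D : R} :
  (forall s a, `|rw s a - rw' s a| <= K) -> (forall s, `|V rw pi s - V rw' pi' s| <= D) ->
  forall s a, `|qvalue rw pi s a - qvalue rw' pi' s a| <= K + gamma * D.
Proof.
move=> rw_rw' VV' s a.
have -> : qvalue rw pi s a - qvalue rw' pi' s a
    = (rw s a - rw' s a) + gamma * \sum_s' P s a s' * (V rw pi s' - V rw' pi' s').
  by rewrite /qvalue; under [in RHS]eq_bigr do rewrite mulrBr; rewrite sumrB; ring.
apply: le_trans (ler_normD _ _) _; apply: lerD => //.
rewrite normrM ger0_norm // ler_wpM2l //.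
apply: le_trans (ler_norm_sum _ _ _) _.
rewrite -[leRHS]mul1r -(P_kernel.2 s a) mulr_suml; apply: ler_sum => s' _.
by rewrite normrM ger0_norm ?P_kernel.1 // ler_wpM2l ?P_kernel.1.
Qed.

Lemma reg_optimal_value_dist_le {rw rw' pi pi' : S -> A -> R} {K : R} :
  (forall s a, 0 <= rw s a) -> (forall s a, 0 <= rw' s a) ->
  (forall s a, `|rw s a - rw' s a| <= K) ->
  reg_optimal P gamma tau rw pi -> reg_optimal P gamma tau rw' pi' ->
  forall s, `|V rw pi s - V rw' pi' s| <= K / (1 - gamma).
Proof.
move=> rw_ge0 rw'_ge0 rw_rw' pi_opt pi'_opt s.
have [smax _ Vmax] := @arg_maxP _ _ _ s xpredT (fun s => `|V rw pi s - V rw' pi' s|) isT.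
set D : R := `|V rw pi smax - V rw' pi' smax|.
have VD s' : `|V rw pi s' - V rw' pi' s'| <= D := Vmax s' isT.
have D_le : D <= K + gamma * D.
  rewrite {1}/D (reg_optimal_softmax rw_ge0 pi_opt smax).2.
  rewrite (reg_optimal_softmax rw'_ge0 pi'_opt smax).2.
  exact (ln_lse_lipschitz tau a0 tau_gt0 (qvalue_dist_le rw_rw' VD smax)).
apply: le_trans (VD s) _.
by rewrite ler_pdivlMr ?subr_gt0 //; lra.
Qed.

Lemma reg_optimal_policy_dist_le {rw rw' pi pi' : S -> A -> R} {K : R} :
  (forall s a, 0 <= rw s a) -> (forall s a, 0 <= rw' s a) ->
  (forall s a, `|rw s a - rw' s a| <= K) ->
  reg_optimal P gamma tau rw pi -> reg_optimal P gamma tau rw' pi' ->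
  forall s, \sum_a `|pi s a - pi' s a| <= K / ((1 - gamma) * tau).
Proof.
move=> rw_ge0 rw'_ge0 rw_rw' pi_opt pi'_opt s.
have QQ' := qvalue_dist_le rw_rw' (reg_optimal_value_dist_le rw_ge0 rw'_ge0 rw_rw' pi_opt pi'_opt) s.
under eq_bigr do rewrite (reg_optimal_softmax rw_ge0 pi_opt s).1
                         (reg_optimal_softmax rw'_ge0 pi'_opt s).1.
have -> : K / ((1 - gamma) * tau) = (K + gamma * (K / (1 - gamma))) / tau.
  by field; rewrite ?gt_eqF ?subr_gt0.
exact (softmax_l1_lipschitz tau a0 tau_gt0 QQ').
Qed.

End Optimality.

Lemma sum_mul_le_norm2 {R : realType} {m : nat} (u v : 'I_m -> R) :
  \sum_i u i * v i <= norm2 u * norm2 v.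
Proof.
rewrite /norm2 -sqrtrM ?sumr_ge0 // => [|i _]; last exact: sqr_ge0.
apply: le_trans (ler_norm _) _.
by rewrite -sqrtr_sqr ler_sqrt ?sqr_sum_mul_le // mulr_ge0 // sumr_ge0 // => i _; rewrite sqr_ge0.
Qed.

Lemma rmax_ge {R : realType} {S A : finType} (rw : S -> A -> R) s a : rw s a <= rmax rw.
Proof. by rewrite /rmax (bigD1 (s, a)) //= le_max lexx. Qed.

Lemma rlam_ge0 {R : realType} {S A : finType} {m : nat} {r0 : S -> A -> R}
    {r : 'I_m -> S -> A -> R} {lam : 'I_m -> R} :
  (forall s a, 0 <= r0 s a) -> (forall i s a, 0 <= r i s a) -> (forall i, 0 <= lam i) ->
  forall s a, 0 <= rlam r0 r lam s a.
Proof.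
move=> r00 r_ge0 lam0 s a.
by rewrite addr_ge0 // sumr_ge0 // => i _; rewrite mulr_ge0.
Qed.

Lemma rlam_dist_le {R : realType} {S A : finType} {m : nat} (r0 : S -> A -> R)
    (r : 'I_m -> S -> A -> R) (lam lam' : 'I_m -> R) :
  (forall i s a, 0 <= r i s a) -> forall s a,
  `|rlam r0 r lam s a - rlam r0 r lam' s a|
    <= norm2 (fun i => rmax (r i)) * norm2 (fun i => lam i - lam' i).
Proof.
move=> r_ge0 s a.
have -> : rlam r0 r lam s a - rlam r0 r lam' s a = \sum_i (lam i - lam' i) * r i s a.
  by rewrite /rlam; under [in RHS]eq_bigr do rewrite mulrBl; rewrite sumrB; ring.
have -> : norm2 (fun i => lam i - lam' i) = norm2 (fun i => `|lam i - lam' i|).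
  by congr Num.sqrt; apply: eq_bigr => i _; rewrite real_normK ?num_real.
apply: le_trans (ler_norm_sum _ _ _) (le_trans _ (sum_mul_le_norm2 _ _)).
apply: ler_sum => i _; rewrite normrM (ger0_norm (r_ge0 _ _ _)) mulrC.
by rewrite ler_wpM2r ?rmax_ge.
Qed.

Theorem lemma5 (R : realType) (S A : finType) (P : S -> A -> S -> R) (gamma : R)
  (m : nat) (r0 : S -> A -> R) (r : 'I_m -> S -> A -> R) :
  is_kernel P -> 0 < gamma -> gamma < 1 ->
  (forall s a, 0 < r0 s a) -> (forall i s a, 0 < r i s a) ->
  forall (tau : R) (lam lam' : 'I_m -> R) (pi pi' : S -> A -> R),
  0 < tau -> (forall i, 0 <= lam i) -> (forall i, 0 <= lam' i) ->
  reg_optimal P gamma tau (rlam r0 r lam) pi ->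
  reg_optimal P gamma tau (rlam r0 r lam') pi' ->
  forall s : S,
    \sum_(a : A) `|pi s a - pi' s a|
      <= norm2 (fun i => rmax (r i)) / ((1 - gamma) * tau) * norm2 (fun i => lam i - lam' i).
Proof.
move=> P_kernel gamma_gt0 gamma_lt1 r0_gt0 r_gt0 tau lam lam' pi pi' tau_gt0 lam_ge0 lam'_ge0
  pi_opt pi'_opt s.
have [a0] := inhabited_of_sum_eq1 (pi_opt.1.2 s).
have r0_ge0 s' a := ltW (r0_gt0 s' a).
have r_ge0 i s' a := ltW (r_gt0 i s' a).
rewrite mulrAC.
exact (reg_optimal_policy_dist_le P gamma tau a0 P_kernel (ltW gamma_gt0) gamma_lt1 tau_gt0
  (rlam_ge0 r0_ge0 r_ge0 lam_ge0) (rlam_ge0 r0_ge0 r_ge0 lam'_ge0)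
  (rlam_dist_le r0 r lam lam' r_ge0) pi_opt pi'_opt s).
Qed.
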